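(* Let $X$ be a finite set with $n$ elements, let $k\ge1$, and let $R$ be a $k$-Carthaginian rectangle on the symbol set $X$. Then $R$ arises from a sharply $k$-transitive group action if and only if $R$ satisfies the $k$-rectangle condition.
   Context: $X^{(k)}$ denotes the set of ordered $k$-tuples of distinct elements of $X$, and $n^{\underline{k}}=n(n-1)\cdots(n-k+1)$. A $k$-Carthaginian rectangle on $X$ is an $n^{\underline{k}}\times n$ matrix whose rows are permutations of $X$ (each row lists every element of $X$ exactly once) such that for every choice of $k$ distinct columns, the $k$-tuples read off from those columns in the rows range over each of the $n^{\underline{k}}$ elements of $X^{(k)}$ exactly once. A $2\times(k+1)$ submatrix of $R$ is the array obtained by choosing two distinct rows of $R$ and $k+1$ distinct columns of $R$ (listed in some order). $R$ satisfies the $k$-rectangle condition if whenever two $2\times(k+1)$ submatrices $A$ and $B$ of $R$ agree in $2k+1$ of their $2(k+1)$ corresponding positions, they also agree in the remaining position. $R$ arises from a sharply $k$-transitive group action if there is a group $G$ acting sharply $k$-transitively on $X$ (i.e. for any two elements of $X^{(k)}$ exactly one $g\in G$ maps the first to the second coordinatewise) and an enumeration $(y_1,\ldots,y_n)$ of $X$ such that the rows of $R$ are exactly the sequences $(gy_1,\ldots,gy_n)$, $g\in G$, each occurring once (the order of the rows being irrelevant). *)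

From mathcomp Require Import all_boot all_fingroup.
Set Implicit Arguments. Unset Strict Implicit. Unset Printing Implicit Defensive.

Definition rect (X : finType) (k : nat) := 'I_(#|X| ^_ k) -> 'I_#|X| -> X.

Definition carthaginian (X : finType) (k : nat) (R : rect X k) : Prop :=
  (forall i, bijective (R i)) /\
  (forall c : 'I_k -> 'I_#|X|, injective c ->
     forall t : 'I_k -> X, injective t ->
       exists! i, forall j, R i (c j) = t j).

Definition submx2 (X : finType) (k : nat) (R : rect X k)
    (r1 r2 : 'I_(#|X| ^_ k)) (d : 'I_k.+1 -> 'I_#|X|) : 'I_2 -> 'I_k.+1 -> X :=
  fun p q => R (if p == ord0 then r1 else r2) (d q).

Definition rectangle_condition (X : finType) (k : nat) (R : rect X k) : Prop :=
  forall (r1 r2 s1 s2 : 'I_(#|X| ^_ k)) (d e : 'I_k.+1 -> 'I_#|X|),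
    r1 != r2 -> s1 != s2 -> injective d -> injective e ->
    forall (p : 'I_2) (q : 'I_k.+1),
      (forall (p' : 'I_2) (q' : 'I_k.+1), (p', q') != (p, q) ->
          submx2 R r1 r2 d p' q' = submx2 R s1 s2 e p' q') ->
      submx2 R r1 r2 d p q = submx2 R s1 s2 e p q.

Definition sharply_k_transitive (gT : finGroupType) (X : finType)
    (to : {action gT &-> X}) (k : nat) : Prop :=
  forall u v : 'I_k -> X, injective u -> injective v ->
    exists! g : gT, forall j, to (u j) g = v j.

(* R arises from a sharply k-transitive group action: there is a group acting
   sharply k-transitively on X and an enumeration y of X such that the rows of
   R are exactly the sequences (g y_1, ..., g y_n), each occurring once
   (f is the bijection rows -> group elements). *)
Definition arises_from_sharply_k_transitive (X : finType) (k : nat) (R : rect X k)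
    : Prop :=
  exists (gT : finGroupType) (to : {action gT &-> X}) (y : 'I_#|X| -> X),
    [/\ bijective y, sharply_k_transitive to k &
        exists f : 'I_(#|X| ^_ k) -> gT,
          bijective f /\ forall i j, R i j = to (y j) (f i)].

From mathcomp Require Import all_boot all_fingroup.

Set Implicit Arguments. Unset Strict Implicit. Unset Printing Implicit Defensive.

(* In a sharply k-transitive group an element is determined by its values on
   k distinct points.  If the rectangles with rows (g1, g2) and (h1, h2) agree
   except possibly at (g1, q), then g1 and g2 h2^-1 h1 agree on the k columns
   other than q, hence are equal, so the rectangles agree at q as well.
   Conversely, fix a base row i0 and let sigma_i be the permutation
   R i0 j |-> R i j; the Carthaginian property says that exactly one sigma_i
   takes any k distinct points to any k distinct points.  For b <> i0, let
   sigma_c be the one agreeing with sigma_a sigma_b on k base points; the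
   rectangle condition applied to rows (c, a) and (b, i0) propagates this
   agreement to every point, so the sigma_i form a group, which acts sharply
   k-transitively and yields R. *)

Section SharplyTransitive.

Variables (gT : finGroupType) (X : finType) (to : {action gT &-> X}) (k : nat).
Hypothesis sharp_to : sharply_k_transitive to k.

Lemma sharply_k_transitive_eq (u : 'I_k -> X) (g h : gT) :
  injective u -> (forall j, to (u j) g = to (u j) h) -> g = h.
Proof.
move=> u_inj eq_gh.
have uh_inj : injective (fun j => to (u j) h) by move=> j1 j2 /act_inj /u_inj.
have [h' [_ uniq_uh]] := sharp_to u_inj uh_inj.
by rewrite -(uniq_uh g) // (uniq_uh h).
Qed.

Lemma sharply_k_transitive_rectangle (g1 g2 h1 h2 : gT)
    (a b : 'I_k.+1 -> X) (q : 'I_k.+1) :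
  injective a ->
  (forall q', to (a q') g2 = to (b q') h2) ->
  (forall q', q' != q -> to (a q') g1 = to (b q') h1) ->
  to (a q) g1 = to (b q) h1.
Proof.
move=> a_inj row2 row1.
have bE q' : b q' = to (a q') (g2 * h2^-1)%g by rewrite actM row2 actK.
suff -> : g1 = (g2 * h2^-1 * h1)%g by rewrite actM bE.
apply: (@sharply_k_transitive_eq (a \o lift q)) => [j1 j2 /a_inj/lift_inj // | j].
by rewrite /= row1 ?bE ?actM // eq_sym neq_lift.
Qed.

End SharplyTransitive.

Lemma arises_rectangle_condition (X : finType) (k : nat) (R : rect X k) :
  arises_from_sharply_k_transitive R -> rectangle_condition R.
Proof.
case=> gT [to [y [[y' yK _] sharp_to [f [_ Rf]]]]] r1 r2 s1 s2 d e _ _ d_inj _.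
move=> p q agree.
have [p' p'p] : exists p' : 'I_2, p' != p.
  exists (if p == ord0 then ord_max else ord0).
  by case: ifPn => [/eqP-> | ]; rewrite // eq_sym.
rewrite /submx2 !Rf.
apply: (sharply_k_transitive_rectangle sharp_to (a := y \o d) (b := y \o e)
         (g2 := f (if p' == ord0 then r1 else r2))
         (h2 := f (if p' == ord0 then s1 else s2))).
- by move=> q1 q2 /(can_inj yK)/d_inj.
- move=> q'; have := agree p' q'; rewrite /submx2 !Rf; apply.
  by rewrite xpair_eqE (negbTE p'p).
- move=> q' q'q; have := agree p q'; rewrite /submx2 !Rf; apply.
  by rewrite xpair_eqE (negbTE q'q) andbF.
Qed.

Section ExtendTuple.

Variables (T : eqType) (k : nat) (u : 'I_k -> T) (x : T).

Definition ext_tuple (q : 'I_k.+1) : T :=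
  if unlift ord_max q is Some j then u j else x.

Lemma ext_tuple_lift j : ext_tuple (lift ord_max j) = u j.
Proof. by rewrite /ext_tuple liftK. Qed.

Lemma ext_tuple_max : ext_tuple ord_max = x.
Proof. by rewrite /ext_tuple unlift_none. Qed.

Lemma ext_tuple_inj : injective u -> x \notin codom u -> injective ext_tuple.
Proof.
move=> u_inj x_u q1 q2; rewrite /ext_tuple.
case: unliftP => [j1 ->|->]; case: unliftP => [j2 ->|->] //.
- by move/u_inj->.
- by move=> ujx; rewrite -ujx codom_f in x_u.
- by move=> xuj; rewrite xuj codom_f in x_u.
Qed.

End ExtendTuple.

Section SubgPermAction.

Variables (T : finType) (G : {group {perm T}}).

Definition subg_perm_act (x : T) (g : subg_of G) : T := sgval g x.

Lemma subg_perm_act1 : subg_perm_act^~ 1%g =1 id.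
Proof. by move=> x; rewrite /subg_perm_act perm1. Qed.

Lemma subg_perm_actM x : act_morph subg_perm_act x.
Proof. by move=> g h; rewrite /subg_perm_act sgvalM ?inE // permM. Qed.

Definition subg_perm_action := TotalAction subg_perm_act1 subg_perm_actM.

Lemma subg_perm_actionE x g : subg_perm_action x g = sgval g x.
Proof. by []. Qed.

End SubgPermAction.

Section RectangleGroup.

Variables (X : finType) (k : nat) (R : rect X k).
Variables (i0 : 'I_(#|X| ^_ k)) (col : X -> 'I_#|X|).
Hypotheses (k_le_n : k <= #|X|) (cartR : carthaginian R).
Hypotheses (rectR : rectangle_condition R) (colK : cancel col (R i0)).

Let R_bij : forall i, bijective (R i) := proj1 cartR.

Lemma rperm_subproof i : injective (fun x => R i (col x)).
Proof. by move=> x1 x2 /(bij_inj (R_bij i))/(can_inj colK). Qed.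

Definition rperm i : {perm X} := perm (@rperm_subproof i).

Lemma rpermE i x : rperm i x = R i (col x).
Proof. exact: permE. Qed.

Lemma rperm_row i j : rperm i (R i0 j) = R i j.
Proof.
by rewrite rpermE; congr (R i _); apply: (bij_inj (R_bij i0)); rewrite colK.
Qed.

Lemma rperm0 : rperm i0 = 1%g.
Proof. by apply/permP => x; rewrite rpermE colK perm1. Qed.

Lemma rperm_uniq (u v : 'I_k -> X) : injective u -> injective v ->
  exists! i, forall j, rperm i (u j) = v j.
Proof.
move=> u_inj v_inj.
have col_u_inj : injective (col \o u) by move=> j1 j2 /(can_inj colK)/u_inj.
have [i [iuv i_uniq]] := proj2 cartR _ col_u_inj v v_inj.
exists i; split=> [j | i' i'uv]; first by rewrite rpermE iuv.
by apply: i_uniq => j; rewrite -rpermE.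
Qed.

Lemma rperm_tuple_inj (u : 'I_k -> X) i i' : injective u ->
  (forall j, rperm i (u j) = rperm i' (u j)) -> i = i'.
Proof.
move=> u_inj eq_ii'.
have ui'_inj : injective (fun j => rperm i' (u j)) by move=> j1 j2 /perm_inj/u_inj.
have [i1 [_ uniq_ui']] := rperm_uniq u_inj ui'_inj.
by rewrite -(uniq_ui' i) // (uniq_ui' i').
Qed.

Definition base_tuple (j : 'I_k) : X := R i0 (widen_ord k_le_n j).

Lemma base_tuple_inj : injective base_tuple.
Proof. by move=> j1 j2 /(bij_inj (R_bij i0))/(congr1 val)/= /val_inj. Qed.

Lemma rperm_inj : injective rperm.
Proof.
by move=> i i' eq_ii'; apply: (rperm_tuple_inj base_tuple_inj) => j; rewrite eq_ii'.
Qed.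

Lemma rpermM_tuple a b c (u : 'I_k -> X) : injective u -> c != a -> b != i0 ->
  (forall j, rperm c (u j) = rperm b (rperm a (u j))) ->
  rperm c = (rperm a * rperm b)%g.
Proof.
move=> u_inj ca b0 cu; apply/permP => x; rewrite permM.
have [/codomP [j ->] | x_u] := boolP (x \in codom u); first exact: cu.
have w_inj := ext_tuple_inj u_inj x_u; set w := ext_tuple u x in w_inj.
have d_inj : injective (col \o w) by move=> q1 q2 /(can_inj colK)/w_inj.
have e_inj : injective (col \o rperm a \o w).
  by move=> q1 q2 /(can_inj colK)/perm_inj/w_inj.
have := rectR ca b0 d_inj e_inj (p := ord0) (q := ord_max).
rewrite /submx2 /= -!rpermE /w ext_tuple_max; apply.
case=> [[|[|//]] p_lt] q /=; rewrite -!rpermE ?rperm0 ?perm1 // => pq.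
have [j ->| qmax] := unliftP ord_max q; first by rewrite ext_tuple_lift cu.
by rewrite qmax xpair_eqE eqxx andbT in pq.
Qed.

Lemma rpermM a b : exists c, rperm c = (rperm a * rperm b)%g.
Proof.
have [-> | b0] := eqVneq b i0; first by exists a; rewrite rperm0 mulg1.
have au_inj : injective (fun j => rperm a (base_tuple j)).
  by move=> j1 j2 /perm_inj/base_tuple_inj.
have bau_inj : injective (fun j => rperm b (rperm a (base_tuple j))).
  by move=> j1 j2 /perm_inj/au_inj.
have [c [cu _]] := rperm_uniq base_tuple_inj bau_inj.
have ca : c != a.
  apply: contra_neq b0 => ca; apply: (rperm_tuple_inj au_inj) => j.
  by rewrite rperm0 perm1 -cu ca.
by exists c; apply: rpermM_tuple base_tuple_inj ca b0 cu.
Qed.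

Definition rperm_set : {set {perm X}} := [set rperm i | i in 'I_(#|X| ^_ k)].

Lemma rperm_group_set : group_set rperm_set.
Proof.
apply/group_setP; split; first by rewrite -rperm0 imset_f.
move=> _ _ /imsetP[a _ ->] /imsetP[b _ ->].
by have [c <-] := rpermM a b; apply: imset_f.
Qed.

Canonical rperm_group := Group rperm_group_set.

Definition rperm_subg i : subg_of rperm_group := subg rperm_group (rperm i).

Lemma rperm_subgK i : sgval (rperm_subg i) = rperm i.
Proof. by rewrite subgK ?imset_f. Qed.

Lemma rperm_subg_bij : bijective rperm_subg.
Proof.
apply: inj_card_bij => [i i' /(congr1 sgval) | ].
  by rewrite !rperm_subgK => /rperm_inj.
by rewrite card_sub card_imset //; apply: rperm_inj.
Qed.

Lemma rperm_sharply_k_transitive :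
  sharply_k_transitive (subg_perm_action rperm_group) k.
Proof.
move=> u v u_inj v_inj; have [i [iuv i_uniq]] := rperm_uniq u_inj v_inj.
exists (rperm_subg i); split=> [j | g guv].
  by rewrite subg_perm_actionE rperm_subgK.
have [f' _ f'K] := rperm_subg_bij.
rewrite -[g]f'K in guv *; congr rperm_subg; apply: i_uniq => j.
by rewrite -guv subg_perm_actionE rperm_subgK.
Qed.

Lemma rectangle_arises : arises_from_sharply_k_transitive R.
Proof.
exists (subg_of rperm_group), (subg_perm_action rperm_group), (R i0).
split; [exact: R_bij | exact: rperm_sharply_k_transitive |].
exists rperm_subg; split; first exact: rperm_subg_bij.
by move=> i j; rewrite subg_perm_actionE rperm_subgK rperm_row.
Qed.

End RectangleGroup.

Theorem theorem3p3 (X : finType) (k : nat) (R : rect X k) :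
  1 <= k -> k <= #|X| -> carthaginian R ->
  (arises_from_sharply_k_transitive R <-> rectangle_condition R).
Proof.
move=> _ k_le_n cartR; split; first exact: arises_rectangle_condition.
have rows_gt0 : 0 < #|X| ^_ k by rewrite ffact_gt0.
have [col _ colK] := proj1 cartR (Ordinal rows_gt0).
by move=> rectR; apply: rectangle_arises colK.
Qed.
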